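(* Let $p$ be a prime. Every $p$-$T_0T^\ast$-perfect number $n>1$ has the form $n=p_1^{2p-1}$ for some prime $p_1$.
   Context: For a positive integer $m$, $T(m)$ denotes the product of all positive divisors of $m$, and $T^\ast(m)$ the product of all unitary divisors of $m$ (divisors $d$ with $\gcd(d,m/d)=1$). For an integer $k\ge 2$, an integer $n>1$ is called $k$-$T_0T^\ast$-perfect if $T(T^\ast(n))=n^k$. *)

From mathcomp Require Import all_boot.
Set Implicit Arguments. Unset Strict Implicit. Unset Printing Implicit Defensive.

Definition T (m : nat) : nat := \prod_(d <- divisors m) d.

Definition Tstar (m : nat) : nat :=
  \prod_(d <- divisors m | coprime d (m %/ d)) d.

Definition kT0Tstar_perfect (k n : nat) : Prop :=
  2 <= k /\ 1 < n /\ T (Tstar n) = n ^ k.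

From mathcomp Require Import all_boot zify.
Set Implicit Arguments. Unset Strict Implicit.

(* Pairing each divisor d of m with m/d gives T(m)^2 = m^tau(m) and
   T*(n)^2 = n^u(n), u(n) the number of unitary divisors; hence a
   p-T0T*-perfect n satisfies 4p = u(n) * tau(T*(n)).  For n = q^a we get u = 2,
   T*(n) = n and so 4p = 2(a+1).  Otherwise n has two coprime factors > 1,
   so u(n) >= 4, and T*(n) has at least two prime divisors, one of them q
   with valuation b >= 2; then tau(T*(n)) = k(b+1) with k >= 2, and 4p
   cannot be a product of factors >= 4, 2 and 3 when p is prime. *)

Lemma divn_codivisor m d : 0 < m -> d %| m -> m %/ (m %/ d) = d.
Proof. by move=> m0 dm; rewrite divnA // mulKn. Qed.

Lemma perm_divisors_codivisor m : 0 < m ->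
  perm_eq (divisors m) (map (divn m) (divisors m)).
Proof.
move=> m0; apply: uniq_perm; first exact: divisors_uniq.
  rewrite map_inj_in_uniq ?divisors_uniq // => x y.
  rewrite -!dvdn_divisors // => xm ym exy.
  by rewrite -(divn_codivisor m0 xm) exy divn_codivisor.
move=> d; apply/idP/mapP; rewrite -dvdn_divisors //.
  move=> dm; exists (m %/ d); last by rewrite divn_codivisor.
  by rewrite -dvdn_divisors // dvdn_div.
by case=> e; rewrite -dvdn_divisors // => em ->; apply: dvdn_div.
Qed.

Lemma prod_divisors_sq m (P : pred nat) : 0 < m ->
    (forall d, d %| m -> P (m %/ d) = P d) ->
  (\prod_(d <- divisors m | P d) d) ^ 2 = m ^ count P (divisors m).
Proof.
move=> m0 Pcodiv.
have prod_codiv : \prod_(d <- divisors m | P d) d = \prod_(d <- divisors m | P d) (m %/ d).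
  rewrite [LHS](perm_big _ (perm_divisors_codivisor m0)) big_map.
  rewrite big_seq_cond [RHS]big_seq_cond; apply: eq_bigl => d.
  by case: (boolP (d \in _)) => //=; rewrite -dvdn_divisors // => /Pcodiv ->.
rewrite -mulnn {1}prod_codiv -big_split /= big_seq_cond.
rewrite (eq_bigr (fun=> m)); last first.
  by move=> d /andP[]; rewrite -dvdn_divisors // => /divnK.
by rewrite big_const_seq iter_muln_1 (eq_in_count (a2 := P)) // => d /= ->.
Qed.

Definition unitary_count n := count (fun d => coprime d (n %/ d)) (divisors n).

Lemma T_sq m : 0 < m -> T m ^ 2 = m ^ size (divisors m).
Proof. by move=> m0; rewrite -count_predT [LHS]prod_divisors_sq. Qed.

Lemma Tstar_sq n : 0 < n -> Tstar n ^ 2 = n ^ unitary_count n.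
Proof.
by move=> n0; rewrite [LHS]prod_divisors_sq // => d dn; rewrite divn_codivisor // coprime_sym.
Qed.

Lemma Tstar_gt0 n : 0 < n -> 0 < Tstar n.
Proof.
move=> n0; have : 0 < Tstar n ^ 2 by rewrite Tstar_sq // expn_gt0 n0.
by rewrite expn_gt0 orbF.
Qed.

Lemma perfect_size_divisors k n : kT0Tstar_perfect k n ->
  4 * k = unitary_count n * size (divisors (Tstar n)).
Proof.
move=> [_ [n_gt1 TTn]]; have n0 := ltnW n_gt1.
apply/eqP; rewrite -(eqn_exp2l _ _ n_gt1) mulnC !expnM -TTn -expnM.
by rewrite (expnM _ 2 2) T_sq ?Tstar_gt0 // -expnM mulnC expnM Tstar_sq // -expnM.
Qed.

Lemma perm_divisors_pfactor q a : prime q ->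
  perm_eq (divisors (q ^ a)) (map (expn q) (iota 0 a.+1)).
Proof.
move=> q_pr; have q_gt1 := prime_gt1 q_pr.
apply: uniq_perm; first exact: divisors_uniq.
  by rewrite map_inj_uniq ?iota_uniq //; apply: expnI.
move=> d; rewrite -dvdn_divisors ?expn_gt0 ?prime_gt0 //.
apply/(dvdn_pfactor _ _ q_pr)/mapP => -[i].
  by move=> ia ->; exists i; rewrite // mem_iota add0n ltnS.
by rewrite mem_iota add0n ltnS => ia ->; exists i.
Qed.

Lemma size_divisors_pfactor q a : prime q -> size (divisors (q ^ a)) = a.+1.
Proof. by move=> q_pr; rewrite (perm_size (perm_divisors_pfactor a q_pr)) size_map size_iota. Qed.

Lemma coprime_pexp q i j : prime q -> coprime (q ^ i) (q ^ j) = (i == 0) || (j == 0).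
Proof.
move=> q_pr; case: i => [|i]; first by rewrite coprime1n.
case: j => [|j]; first by rewrite coprimen1.
by rewrite coprime_pexpl // coprime_pexpr // prime_coprime // dvdnn.
Qed.

Lemma unitary_count_pfactor q a : prime q -> 0 < a -> unitary_count (q ^ a) = 2.
Proof.
move=> q_pr a0; rewrite /unitary_count (permP (perm_divisors_pfactor a q_pr)) count_map.
rewrite (@eq_in_count _ _ (fun i => (i == 0) || (i == a))); last first.
  move=> i; rewrite mem_iota add0n ltnS => /andP[_ ia] /=.
  by rewrite -expnB ?prime_gt0 // coprime_pexp // subn_eq0 (eqn_leq i a) ia.
rewrite (_ : a.+1 = 1 + (a.-1 + 1)); last lia.
rewrite !iotaD !count_cat /= !add0n !add1n prednK // eqxx.
rewrite (@eq_in_count _ _ pred0) ?count_pred0 // => i.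
by rewrite mem_iota => /andP[i0 ia] /=; lia.
Qed.

Lemma gcdn_mul_coprime_divisor d x y : coprime x y -> d %| x * y ->
  gcdn d x * gcdn d y = d.
Proof.
move=> cxy dxy; apply/eqP; rewrite eqn_dvd; apply/andP; split.
  rewrite Gauss_dvd ?dvdn_gcdl //.
  exact: coprime_dvdl (dvdn_gcdr _ _) (coprime_dvdr (dvdn_gcdr _ _) cxy).
have d_gx_y : d %| gcdn d x * y.
  by rewrite muln_gcdl dvdn_gcd dvdn_mulr.
have : d %| gcdn (gcdn d x * y) (gcdn d x * d) by rewrite dvdn_gcd d_gx_y dvdn_mull.
by rewrite -muln_gcdr [gcdn y d]gcdnC.
Qed.

Lemma size_divisors_coprime_mul x y : 0 < x -> 0 < y -> coprime x y ->
  size (divisors (x * y)) = size (divisors x) * size (divisors y).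
Proof.
move=> x0 y0 cxy; have xy0 : 0 < x * y by rewrite muln_gt0 x0.
rewrite -(size_allpairs muln); apply: perm_size.
apply: uniq_perm; first exact: divisors_uniq.
  apply: allpairs_uniq; try exact: divisors_uniq.
  move=> [? ?] [? ?] /allpairsP[[d1 d2] [/= d1x d2y [-> ->]]].
  move=> /allpairsP[[e1 e2] [/= e1x e2y [-> ->]]] /= de.
  move: d1x d2y e1x e2y; rewrite -!dvdn_divisors // => d1x d2y e1x e2y.
  have gcd_x u v : u %| x -> v %| y -> gcdn x (u * v) = u.
    by move=> ux vy; rewrite Gauss_gcdl ?(gcdn_idPr ux) // (coprime_dvdr vy).
  have e1E : e1 = d1 by rewrite -(gcd_x d1 d2) // de gcd_x.
  subst e1; congr (_, _); apply/eqP.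
  by rewrite -(eqn_pmul2l (dvdn_gt0 x0 d1x)) de.
move=> d; rewrite -dvdn_divisors //; apply/idP/allpairsP => [dxy|].
  exists (gcdn d x, gcdn d y); rewrite /= -!dvdn_divisors // !dvdn_gcdr.
  by rewrite gcdn_mul_coprime_divisor.
by move=> [[a b] [/=]]; rewrite -!dvdn_divisors // => ax By ->; apply: dvdn_mul.
Qed.

Lemma size_divisors_gt1 m : 1 < m -> 1 < size (divisors m).
Proof.
move=> m_gt1; have m0 := ltnW m_gt1.
suff : size [:: 1; m] <= size (divisors m) by [].
apply: uniq_leq_size => [|d]; first by rewrite /= inE (ltn_eqF m_gt1).
by rewrite !inE => /orP[] /eqP ->; rewrite ?divisor1 ?divisors_id.
Qed.

Lemma size_divisors_logn m q s : 0 < m -> prime q -> prime s -> s != q -> s %| m ->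
  exists2 k, 1 < k & size (divisors m) = k * (logn q m).+1.
Proof.
move=> m0 q_pr s_pr sq sm; have [m' q_m' mE] := pfactor_coprime q_pr m0.
have m'0 : 0 < m' by move: m0; rewrite mE muln_gt0 => /andP[].
have s_m' : s %| m'.
  rewrite -(Gauss_dvdl _ (_ : coprime s (q ^ logn q m))) -?mE //.
  by rewrite coprimeXr // prime_coprime // dvdn_prime2 // eq_sym.
exists (size (divisors m')).
  by apply/size_divisors_gt1/(leq_trans (prime_gt1 s_pr))/dvdn_leq.
rewrite [in LHS]mE size_divisors_coprime_mul ?expn_gt0 ?(prime_gt0 q_pr) //.
  by rewrite size_divisors_pfactor.
by rewrite coprime_sym coprimeXl.
Qed.

Lemma unitary_count_ge4 x r : 1 < x -> 1 < r -> coprime x r ->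
  3 < unitary_count (x * r).
Proof.
move=> x_gt1 r_gt1 cxr; set n := x * r.
have n_gt1 : 1 < n by rewrite (leq_trans x_gt1) // leq_pmulr // ltnW.
have xn : x < n by rewrite -{1}(muln1 x) ltn_mul2l ltnW.
have rn : r < n by rewrite -{1}(mul1n r) ltn_mul2r ltnW.
have xr : x != r by apply: contraTneq cxr => ->; rewrite /coprime gcdnn (gtn_eqF r_gt1).
rewrite /unitary_count -size_filter.
suff : size [:: 1; x; r; n] <= size (filter (fun d => coprime d (n %/ d)) (divisors n)) by [].
apply: uniq_leq_size => [|d].
  rewrite /= !inE !negb_or xr (ltn_eqF x_gt1) (ltn_eqF r_gt1) (ltn_eqF n_gt1).
  by rewrite (ltn_eqF xn) (ltn_eqF rn).
rewrite mem_filter -dvdn_divisors ?(ltnW n_gt1) // !inE.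
case/or4P => /eqP ->.
- by rewrite coprime1n dvd1n.
- by rewrite mulKn ?cxr ?dvdn_mulr // ltnW.
- by rewrite mulnK 1?coprime_sym ?cxr ?dvdn_mull // ltnW.
- by rewrite divnn (ltnW n_gt1) coprimen1 dvdnn.
Qed.

Lemma four_prime_neq_mul3 p u k c : prime p -> 3 < u -> 1 < k -> 2 < c ->
  4 * p != u * (k * c).
Proof.
move=> p_pr u4 k2 c3; apply/eqP => E.
have small x y : p <= x -> 4 < y -> 4 * p = x * y -> False by move=> px y5; nia.
have : p %| u * (k * c) by rewrite -E dvdn_mull.
rewrite !Euclid_dvdM // => /or3P[pu|pk|pc].
- by apply: small (dvdn_leq _ pu) _ E; nia.
- by apply: small (dvdn_leq _ pk) _ (etrans E (mulnCA _ _ _)); nia.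
- by apply: small (dvdn_leq _ pc) _ (etrans E (etrans (mulnA _ _ _) (mulnC _ _))); nia.
Qed.

Lemma perfect_pfactor_exponent p q a : prime q -> 0 < a ->
  kT0Tstar_perfect p (q ^ a) -> a = 2 * p - 1.
Proof.
move=> q_pr a0 perf; have qa0 : 0 < q ^ a by rewrite expn_gt0 prime_gt0.
have Tstar_pfactor : Tstar (q ^ a) = q ^ a.
  by apply/eqP; rewrite -(eqn_exp2r _ _ (isT : 0 < 2)) Tstar_sq // unitary_count_pfactor.
move: (perfect_size_divisors perf).
rewrite Tstar_pfactor unitary_count_pfactor // size_divisors_pfactor //; lia.
Qed.

Lemma perfect_not_coprime_mul p q a r : prime p -> prime q -> 0 < a -> 1 < r ->
  coprime q r -> ~ kT0Tstar_perfect p (r * q ^ a).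
Proof.
move=> p_pr q_pr a0 r_gt1 qr perf; set n := r * q ^ a in perf.
have n0 : 0 < n by rewrite /n muln_gt0 expn_gt0 (prime_gt0 q_pr) (ltnW r_gt1).
set u := unitary_count n; set M := Tstar n.
have u4 : 3 < u.
  rewrite /u /n mulnC unitary_count_ge4 ?coprimeXl //.
  by rewrite -(exp1n a) ltn_exp2r ?prime_gt1.
have s_pr := pdiv_prime r_gt1; set s := pdiv r in s_pr.
have sq : s != q.
  by apply: contraTneq qr => <-; rewrite prime_coprime // negbK pdiv_dvd.
have sM : s %| M.
  have : s %| M ^ 2.
    rewrite Tstar_sq // (dvdn_trans (pdiv_dvd r)) //.
    by apply: dvdn_trans (dvdn_mulr (q ^ a) (dvdnn r)) (dvdn_exp _ _); rewrite // -/u; lia.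
  by rewrite Euclid_dvdX // => /andP[].
have [k k_gt1 sizeM] := size_divisors_logn (Tstar_gt0 n0) q_pr s_pr sq sM.
have logM : 2 * logn q M = u * logn q n by rewrite -!lognX Tstar_sq.
have logn_gt0 : 0 < logn q n.
  by rewrite -(pfactor_dvdn 1 q_pr n0) (dvdn_trans _ (dvdn_mull r (dvdnn _))) // dvdn_exp2l.
have logM_gt1 : 1 < logn q M by nia.
move: (perfect_size_divisors perf); rewrite -/u -/M sizeM; apply/eqP.
exact: four_prime_neq_mul3.
Qed.

Theorem mainTheorem7 (p n : nat) :
  prime p -> 1 < n -> kT0Tstar_perfect p n ->
  exists p1 : nat, prime p1 /\ n = p1 ^ (2 * p - 1).
Proof.
move=> p_pr n_gt1 perf; have n0 := ltnW n_gt1.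
have q_pr := pdiv_prime n_gt1; set q := pdiv n in q_pr.
have a0 : 0 < logn q n by rewrite logn_gt0 mem_primes q_pr n0 pdiv_dvd.
have [r qr nE] := pfactor_coprime q_pr n0; set a := logn q n in a0 nE.
have [r1|r_gt1] : r = 1 \/ 1 < r.
  by move: n0; rewrite nE muln_gt0 => /andP[]; lia.
  exists q; split=> //; rewrite nE r1 mul1n in perf *.
  by rewrite -(perfect_pfactor_exponent q_pr a0 perf).
by rewrite nE in perf; case: (perfect_not_coprime_mul p_pr q_pr a0 r_gt1 qr perf).
Qed.
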